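(* Let $k, \ell \in \mathbb{N}$ and let $T$ be a tournament on vertex set $V=Q_1\,\dot{\cup}\,\dots\, \dot{\cup}\, Q_\ell$ (a disjoint union), with $|Q_j|\geq k+1$ for all $j\in \{1,\dots ,\ell\}$. Suppose that for each $j\in \{1,\dots ,\ell\}$, $T[Q_j]$ is a backwards-transitive path. Then there exist sets $U, W, U', W'$ such that: (a) $U\subseteq U'\subseteq V(T)$ and $W\subseteq W'\subseteq V(T)$; (b) $|U|,|W|\leq 2k(k+1)$ and $|U'|=|W'|= \ell(k+1)$; (c) for any set $S\subseteq V(T)$ of size at most $k-1$ and every vertex $v\in V(T)\setminus S$, there exists a directed path (possibly of length $0$) in $T[(U'\cup \{v\})\setminus S]$ from $v$ to a vertex in $U$, and a directed path (possibly of length $0$) in $T[(W'\cup \{v\})\setminus S]$ from a vertex in $W$ to $v$.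
   Context: A tournament is an orientation of a complete graph; $T[U]$ denotes the subtournament induced by $U$. A non-empty tournament $Q$ is a backwards-transitive path if its vertices can be enumerated $q_1,\dots, q_{|Q|}$ such that there is an edge from $q_i$ to $q_j$ if and only if either $j=i+1$ or $i\geq j+2$. *)

From mathcomp Require Import all_boot.
Set Implicit Arguments. Unset Strict Implicit. Unset Printing Implicit Defensive.

Definition tournament (V : finType) (e : rel V) : Prop :=
  (forall x, ~~ e x x) /\
  (forall x y, x != y -> (e x y || e y x)) /\
  (forall x y, e x y -> ~~ e y x).

(* T[Q] is a backwards-transitive path: Q is non-empty and its vertices can be
   enumerated q_1,...,q_|Q| (here 0-indexed q : 'I_#|Q| -> V, a bijection onto Q)
   so that q_i -> q_j iff j = i+1 or i >= j+2. *)
Definition bt_path (V : finType) (e : rel V) (Q : {set V}) : Prop :=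
  0 < #|Q| /\
  exists q : 'I_#|Q| -> V,
    injective q /\ (forall i, q i \in Q) /\
    (forall i j : 'I_#|Q|, e (q i) (q j) = (j == i.+1 :> nat) || (j.+2 <= i)).

Definition dpath_to (V : finType) (e : rel V) (X : {set V}) (x : V) (Y : {set V}) : Prop :=
  exists p : seq V, [/\ path e x p, uniq (x :: p), all (mem X) (x :: p) & last x p \in Y].

Definition dpath_from (V : finType) (e : rel V) (X : {set V}) (Y : {set V}) (x : V) : Prop :=
  exists (y : V) (p : seq V),
    [/\ y \in Y, path e y p, uniq (y :: p), all (mem X) (y :: p) & last y p = x].

(* Inside one block Q_j = q_1 ... q_m, every vertex q_i with i > k+1 beats
   q_1, ..., q_k, so the head {q_1, ..., q_(k+1)} receives at least k edges
   from every other vertex of Q_j; let U' be the union of the heads.  Let U be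
   the 4k vertices of smallest out-degree in T[U'] (or all of U' if it is
   smaller).  If the set C of vertices reachable from some x in T[U' \ S]
   missed U, a vertex y of U \ S would beat all of C, so every vertex outside
   U has out-degree at least |C|; but a vertex of C of low out-degree in T[C]
   has out-degree below |C|/2 + |S|, and a vertex of high out-degree in T[U]
   then forces |S| >= k.  A vertex v outside U' enters U' \ S through one of
   its k out-neighbours there.  W and W' come from the reversed tournament. *)
From mathcomp Require Import all_boot zify.
Set Implicit Arguments. Unset Strict Implicit. Unset Printing Implicit Defensive.

Section InducedConnect.
Variables (V : finType) (e : rel V).

Definition induced (Z : {set V}) : rel V := [rel x y in Z | e x y].

Lemma connect_induced_mem (Z : {set V}) x y : connect (induced Z) x y -> x \in Z -> y \in Z.
Proof.
move/connectP=> [p + ->]; elim: p x => //= z p IH x /andP[/andP[/andP[_ zZ] _] pz] _.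
exact: IH pz zZ.
Qed.

Lemma connect_inducedS (Z Z' : {set V}) : Z \subset Z' ->
  subrel (connect (induced Z)) (connect (induced Z')).
Proof.
move=> sZZ'; apply: connect_sub => x y /andP[/andP[xZ yZ] exy]; apply: connect1.
by rewrite /induced /= (subsetP sZZ' x xZ) (subsetP sZZ' y yZ) exy.
Qed.

Lemma connect_induced_uniq_path (Z : {set V}) x y : connect (induced Z) x y -> x \in Z ->
  exists p, [/\ path e x p, uniq (x :: p), all (mem Z) (x :: p) & last x p = y].
Proof.
move=> /connectP[p + ->] xZ => /shortenP[p' p'_path p'_uniq _].
exists p'; split => //; first by apply: sub_path p'_path => a b /andP[].
rewrite /= xZ /=; elim: p' x p'_path {xZ p'_uniq} => //= z p' IH x.
by case/andP=> /andP[/andP[_ ->] _] /IH.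
Qed.

Lemma dpath_to_connect (Z Y : {set V}) x : x \in Z ->
  (exists2 y, y \in Y & connect (induced Z) x y) -> dpath_to e Z x Y.
Proof.
move=> xZ [y yY /connect_induced_uniq_path/(_ xZ)[p [? ? ? py]]].
by exists p; rewrite py.
Qed.

End InducedConnect.

Lemma dpath_from_connect_rev (V : finType) (e : rel V) (Z Y : {set V}) x :
  x \in Z -> (exists2 y, y \in Y & connect (induced [rel a b | e b a] Z) x y) ->
  dpath_from e Z Y x.
Proof.
move=> xZ [y yY xy]; have yZ := connect_induced_mem xy xZ.
have rev_induced : induced [rel a b | e b a] Z =2 [rel a b | induced e Z b a].
  by move=> a b; rewrite /induced /= [(a \in Z) && _]andbC.
move: xy; rewrite (eq_connect rev_induced) connect_rev /= => yx.
by have [p [? ? ? ?]] := connect_induced_uniq_path yx yZ; exists y, p.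
Qed.

Lemma tournament_rev (V : finType) (e : rel V) :
  tournament e -> tournament [rel a b | e b a].
Proof.
by move=> [irr [tot asym]]; do ![split] => //= x y; [rewrite orbC; apply: tot | apply: asym].
Qed.

Lemma bt_path_rev (V : finType) (e : rel V) (Q : {set V}) :
  bt_path e Q -> bt_path [rel a b | e b a] Q.
Proof.
move=> [Q0 [q [q_inj [qQ qe]]]]; split => //.
exists (q \o @rev_ord _); do ![split] => [||i j].
- exact: inj_comp q_inj (@rev_ord_inj _).
- by move=> i; apply: qQ.
- rewrite /= qe /=; have := ltn_ord i; have := ltn_ord j.
  by move=> ? ?; apply/orP/orP => -[/eqP ?|?]; [left|right|left|right]; try apply/eqP; lia.
Qed.

Section Outdegree.
Variables (V : finType) (e : rel V).

Definition outdeg (A : {set V}) (a : V) : nat := #|[set b in A | e a b]|.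

Lemma outdegS (A B : {set V}) a : A \subset B -> outdeg A a <= outdeg B a.
Proof.
move=> sAB; apply/subset_leq_card/subsetP => b; rewrite !inE => /andP[bA ->].
by rewrite (subsetP sAB b bA).
Qed.

Lemma card_set_sum (A : {set V}) (P : pred V) :
  #|[set b in A | P b]| = \sum_(b in A) P b.
Proof.
rewrite -sum1_card big_mkcond [RHS]big_mkcond /=; apply: eq_bigr => b _.
by rewrite inE; case: (b \in A); case: (P b).
Qed.

Hypothesis tour : tournament e.

Lemma sum_outdeg_double (A : {set V}) : \sum_(a in A) outdeg A a * 2 = #|A| * #|A|.-1.
Proof.
have [irr [tot asym]] := tour.
have edge_or_back a b : e a b + e b a = (a != b).
  case: eqVneq => [->|ab]; first by rewrite (negbTE (irr b)).
  by move: (tot a b ab) (asym a b); case: (e a b); case: (e b a) => // _ /(_ isT).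
transitivity (\sum_(a in A) \sum_(b in A) e a b + \sum_(a in A) \sum_(b in A) e b a).
  rewrite [X in _ + X]exchange_big -big_split /=; apply: eq_bigr => a _.
  by rewrite /outdeg card_set_sum; lia.
rewrite -big_split -sum_nat_const; apply: eq_bigr => a aA.
rewrite -big_split (eq_bigr _ (fun b _ => edge_or_back a b)) -card_set_sum.
rewrite (cardsD1 a A) aA add1n /=; apply: eq_card => b.
by rewrite !inE eq_sym andbC.
Qed.

Lemma exists_outdeg_lt_half (A : {set V}) : A != set0 ->
  exists2 a, a \in A & outdeg A a * 2 < #|A|.
Proof.
move=> A0; apply/exists_inP; apply: contraT => /exists_inPn big_outdeg.
have : \sum_(a in A) #|A| <= \sum_(a in A) outdeg A a * 2.
  by apply: leq_sum => a /big_outdeg; rewrite -leqNgt.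
rewrite sum_outdeg_double sum_nat_const; move: A0; rewrite -card_gt0; nia.
Qed.

Lemma exists_outdeg_ge_half (A : {set V}) : A != set0 ->
  exists2 a, a \in A & #|A| <= outdeg A a * 2 + 1.
Proof.
move=> A0; apply/exists_inP; apply: contraT => /exists_inPn small_outdeg.
have : \sum_(a in A) (outdeg A a * 2 + 2) <= \sum_(a in A) #|A|.
  by apply: leq_sum => a /small_outdeg; rewrite -ltnNge addn2 addn1.
rewrite big_split /= !sum_nat_const sum_outdeg_double.
move: A0; rewrite -card_gt0; nia.
Qed.

End Outdegree.

Lemma exists_lowest_subset (V : finType) (f : V -> nat) (X : {set V}) m :
  m <= #|X| -> exists U : {set V}, [/\ U \subset X, #|U| = m &
    forall u y, u \in U -> y \in X :\: U -> f u <= f y].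
Proof.
elim: m => [_|m IH ltmX].
  by exists set0; rewrite sub0set cards0; split=> // u y; rewrite inE.
have [U [sUX cardU lowU]] := IH (ltnW ltmX).
have /set0Pn[x0 x0_out] : X :\: U != set0.
  by rewrite -card_gt0 cardsD (setIidPr sUX) cardU; lia.
case: (arg_minnP f x0_out) => x /setDP[xX xU] x_min.
exists (x |: U); split.
- by rewrite subUset sub1set xX.
- by rewrite cardsU1 xU cardU.
- move=> u y; rewrite !inE => /predU1P[->|uU] /andP[/norP[_ yU] yX].
    by apply: x_min; apply/setDP.
  by apply: lowU; rewrite ?inE ?yU.
Qed.

Lemma exists_notin_card_lt (V : finType) (A S : {set V}) :
  #|S| < #|A| -> exists2 a, a \in A & a \notin S.
Proof.
move=> ltSA; apply/exists_inP; apply: contraT => /exists_inPn AS.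
have /subset_leq_card : A \subset S by apply/subsetP => a /AS /negbNE.
lia.
Qed.

Section LowOutdegreeSet.
Variables (V : finType) (e : rel V) (k : nat) (X U S C : {set V}).
Hypotheses (tour : tournament e) (sUX : U \subset X) (cardU : #|U| = 4 * k)
  (lowU : forall u y, u \in U -> y \in X :\: U -> outdeg e X u <= outdeg e X y)
  (cardS : #|S| < k) (sCXS : C \subset X :\: S) (C0 : C != set0)
  (closedC : forall d z, d \in C -> z \in X :\: S -> e d z -> z \in C).

Lemma closed_meets_low_outdeg : exists2 u, u \in U & u \in C.
Proof.
apply/exists_inP; apply: contraT => /exists_inPn UC_disj.
have [_ [tot _]] := tour.
have sCX : C \subset X by apply: subset_trans sCXS (subsetDl _ _).
have [y yU yS] : exists2 y, y \in U & y \notin S.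
  by apply: exists_notin_card_lt; rewrite cardU; lia.
have y_beats_C d : d \in C -> e y d.
  move=> dC; have yd : y != d by apply: contraNneq (UC_disj y yU) => ->.
  case/orP: (tot y d yd) => // edy; move: (UC_disj y yU); rewrite (closedC dC) //.
  by rewrite inE yS (subsetP sUX y yU).
have outdeg_y : #|C| <= outdeg e X y.
  by apply/subset_leq_card/subsetP => d dC; rewrite inE (subsetP sCX d dC) y_beats_C.
have [d dC outdeg_d] := exists_outdeg_lt_half tour C0.
have outdeg_dX : outdeg e X d <= outdeg e C d + #|S|.
  apply: leq_trans (leq_card_setU [set b in C | e d b] S).1.
  apply: subset_leq_card; apply/subsetP => z; rewrite !inE => /andP[zX edz].
  case: (boolP (z \in S)) => zS; rewrite ?orbT // edz andbT.
  by rewrite (closedC dC _ edz) // inE zS.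
have d_out : d \in X :\: U.
  by rewrite inE (subsetP sCX d dC) andbT; apply: contraTN dC => /UC_disj.
have U0 : U != set0 by rewrite -card_gt0 cardU; lia.
have [u uU outdeg_u] := exists_outdeg_ge_half tour U0.
have := outdegS e u sUX; have := lowU uU d_out; have := lowU yU d_out.
lia.
Qed.

End LowOutdegreeSet.

Lemma exists_small_absorbing_set (V : finType) (e : rel V) k (X : {set V}) :
  tournament e -> exists U : {set V}, [/\ U \subset X, #|U| <= 2 * k * k.+1 &
    forall (S : {set V}) x, #|S| < k -> x \in X :\: S ->
      exists2 u, u \in U & connect (induced e (X :\: S)) x u].
Proof.
move=> tour; case: (leqP #|X| (4 * k)) => [smallX | bigX].
  exists X; split => //; first by apply: leq_trans smallX _; nia.
  by move=> S x _ /setDP[xX _]; exists x.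
have [U [sUX cardU lowU]] := exists_lowest_subset (outdeg e X) (ltnW bigX).
exists U; split => //; first by rewrite cardU; nia.
move=> S x cardS xXS.
pose C := [set z | connect (induced e (X :\: S)) x z].
have sCXS : C \subset X :\: S.
  by apply/subsetP => z; rewrite inE => /connect_induced_mem; apply.
have C0 : C != set0 by apply/set0Pn; exists x; rewrite inE connect0.
have closedC d z : d \in C -> z \in X :\: S -> e d z -> z \in C.
  move=> dC zXS edz; have dXS := subsetP sCXS d dC.
  move: dC; rewrite !inE => xd; apply: connect_trans xd (connect1 _).
  by rewrite /induced /= dXS zXS.
have [u uU uC] := closed_meets_low_outdeg tour sUX cardU lowU cardS sCXS C0 closedC.
by exists u; rewrite // inE in uC.
Qed.

Lemma exists_small_absorbing_set_dominated (V : finType) (e : rel V) k (X : {set V}) :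
  tournament e -> (forall v, v \notin X -> k <= outdeg e X v) ->
  exists U : {set V}, [/\ U \subset X, #|U| <= 2 * k * k.+1 &
    forall (S : {set V}) v, #|S| < k -> v \notin S ->
      exists2 u, u \in U & connect (induced e ((X :|: [set v]) :\: S)) v u].
Proof.
move=> tour dominated; have [U [sUX cardU absorbU]] := exists_small_absorbing_set k X tour.
exists U; split => // S v cardS vS.
have sXSZ : X :\: S \subset (X :|: [set v]) :\: S by rewrite setSD // subsetUl.
have reach w : w \in X :\: S ->
    exists2 u, u \in U & connect (induced e ((X :|: [set v]) :\: S)) w u.
  by move=> /(absorbU S _ cardS)[u uU wu]; exists u; last exact: connect_inducedS wu.
case: (boolP (v \in X)) => vX; first by apply: reach; rewrite inE vS.
have [w] : exists2 w, w \in [set w in X | e v w] & w \notin S.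
  by apply: exists_notin_card_lt; apply: leq_trans cardS (dominated v vX).
rewrite inE => /andP[wX evw] wS.
have [u uU wu] : exists2 u, u \in U & connect (induced e ((X :|: [set v]) :\: S)) w u.
  by apply: reach; rewrite inE wS.
exists u => //; apply: connect_trans wu; apply: connect1.
by rewrite /induced /= !inE vS wS wX evw eqxx orbT.
Qed.

Lemma bt_path_head_dominated (V : finType) (e : rel V) k (Q : {set V}) :
  bt_path e Q -> k < #|Q| ->
  exists X : {set V}, [/\ X \subset Q, #|X| = k.+1 &
    forall v, v \in Q :\: X -> k <= outdeg e X v].
Proof.
move=> [_ [q [q_inj [qQ qe]]]] ltkQ.
pose f (i : 'I_k.+1) := q (widen_ord ltkQ i).
have f_inj : injective f by move=> i j /q_inj/(congr1 val) /= /val_inj.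
have cardX : #|f @: setT| = k.+1 by rewrite card_imset // cardsT card_ord.
exists (f @: setT); split => //; first by apply/subsetP => _ /imsetP[i _ ->]; apply: qQ.
have Qq : Q = q @: setT.
  apply/eqP; rewrite eq_sym eqEcard card_imset // cardsT card_ord leqnn andbT.
  by apply/subsetP => _ /imsetP[i _ ->].
move=> v /setDP[]; rewrite Qq => /imsetP[i _ ->] qiX.
have lt_k_i : k < i.
  rewrite ltnNge; apply: contra qiX => le_i_k; apply/imsetP.
  by exists (Ordinal (le_i_k : i < k.+1)) => //; rewrite /f; congr q; apply: val_inj.
have /subset_leq_card : f @: setT :\ f ord_max \subset [set w in f @: setT | e (q i) w].
  apply/subsetP => w /setD1P[ne /imsetP[j _ wj]]; rewrite wj in ne *.
  rewrite inE imset_f //= /f qe /=.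
  have : j != ord_max by apply: contraNneq ne => ->.
  by rewrite -val_eqE /= => ?; have := ltn_ord j; lia.
by have := cardsD1 (f ord_max) (f @: setT); rewrite imset_f // cardX /outdeg; lia.
Qed.

Lemma exists_dominated_union (V : finType) (e : rel V) k l (Q : 'I_l -> {set V}) :
  (forall i j, i != j -> [disjoint Q i & Q j]) ->
  \bigcup_(j < l) Q j = [set: V] ->
  (forall j, k < #|Q j|) -> (forall j, bt_path e (Q j)) ->
  exists X : {set V}, #|X| = l * k.+1 /\ forall v, v \notin X -> k <= outdeg e X v.
Proof.
move=> disjQ coverQ bigQ btQ.
pose is_head j (X : {set V}) := [&& X \subset Q j, #|X| == k.+1 &
  [forall v in Q j :\: X, k <= outdeg e X v]].
pose head j := odflt set0 [pick X | is_head j X].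
have headP j : is_head j (head j).
  rewrite /head; case: pickP => // no_head.
  have [X [sXQ cardX domX]] := bt_path_head_dominated (btQ j) (bigQ j).
  move/negbT/negP: (no_head X); case; rewrite /is_head sXQ cardX eqxx.
  exact/forall_inP.
exists (\bigcup_(j < l) head j); split.
  rewrite -sum1_card partition_disjoint_bigcup.
    rewrite (eq_bigr (fun _ => k.+1)) ?sum_nat_const ?card_ord // => j _.
    by rewrite sum1_card; case/and3P: (headP j) => _ /eqP.
  move=> i j /disjQ; apply: disjointW.
    by case/and3P: (headP i).
  by case/and3P: (headP j).
move=> v v_out; have /bigcupP[j _ vQ] : v \in \bigcup_(j < l) Q j by rewrite coverQ.
have v_head : v \notin head j by apply: contraNN v_out => vH; apply/bigcupP; exists j.
case/and3P: (headP j) => _ _ /forall_inP/(_ v); rewrite inE v_head vQ => /(_ isT).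
by move/leq_trans; apply; apply: outdegS; apply: bigcup_sup.
Qed.

Lemma exists_absorbing_sets (V : finType) (e : rel V) k l (Q : 'I_l -> {set V}) :
  tournament e ->
  (forall i j, i != j -> [disjoint Q i & Q j]) ->
  \bigcup_(j < l) Q j = [set: V] ->
  (forall j, k < #|Q j|) -> (forall j, bt_path e (Q j)) ->
  exists U U' : {set V}, [/\ U \subset U', #|U| <= 2 * k * k.+1, #|U'| = l * k.+1 &
    forall (S : {set V}) v, #|S| < k -> v \notin S ->
      exists2 u, u \in U & connect (induced e ((U' :|: [set v]) :\: S)) v u].
Proof.
move=> tour disjQ coverQ bigQ btQ.
have [U' [cardU' domU']] := exists_dominated_union disjQ coverQ bigQ btQ.
have [U [sUU' cardU absorbU]] := exists_small_absorbing_set_dominated tour domU'.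
by exists U, U'.
Qed.

Theorem lemma2p7 (k l : nat) (V : finType) (e : rel V) (Q : 'I_l -> {set V}) :
  tournament e ->
  (forall i j, i != j -> [disjoint Q i & Q j]) ->
  (\bigcup_(j < l) Q j = [set: V]) ->
  (forall j, k.+1 <= #|Q j|) ->
  (forall j, bt_path e (Q j)) ->
  exists U W U' W' : {set V},
    [/\ U \subset U' /\ W \subset W',
        #|U| <= 2 * k * k.+1 /\ #|W| <= 2 * k * k.+1,
        #|U'| = l * k.+1 /\ #|W'| = l * k.+1 &
        forall (S : {set V}) (v : V), #|S| < k -> v \notin S ->
          dpath_to e ((U' :|: [set v]) :\: S) v U /\
          dpath_from e ((W' :|: [set v]) :\: S) W v].
Proof.
move=> tour disjQ coverQ bigQ btQ.
have [U [U' [sUU' cardU cardU' absorbU]]] :=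
  exists_absorbing_sets tour disjQ coverQ bigQ btQ.
have [W [W' [sWW' cardW cardW' absorbW]]] := exists_absorbing_sets
  (tournament_rev tour) disjQ coverQ bigQ (fun j => bt_path_rev (btQ j)).
exists U, W, U', W'; split => // S v cardS vS.
have v_in (Z : {set V}) : v \in (Z :|: [set v]) :\: S by rewrite !inE vS eqxx orbT.
split; first exact: dpath_to_connect (v_in _) (absorbU S v cardS vS).
exact: dpath_from_connect_rev (v_in _) (absorbW S v cardS vS).
Qed.
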